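(* Let $N\in\mathbb{N}$, let $x_1,\dots,x_N\in\mathbb{R}^3$ be distinct points and let $\alpha_1,\dots,\alpha_N\in\mathbb{R}$ satisfy (A1) $\alpha_n>0$ for all $n$, and (A2) $\sum_{m\neq n}\frac{1}{(4\pi\alpha_m)^2|x_m-x_n|^2}<1$. Then for every $z\in\mathbb{C}\setminus[0,+\infty)$ the matrix $\Gamma_N^z$ is invertible, and $\Gamma_N^z$ extends continuously to two (distinct) invertible matrices as $z$ approaches the cut $[0,+\infty)$ from above and from below. Furthermore, $(\Gamma_N^z)^{-1}$ and its boundary extensions admit the absolutely convergent Neumann series representation $$(\Gamma_N^z)^{-1}=\sum_{j=0}^\infty\big[(V_N^z)^{-1}P_N^z\big]^j(V_N^z)^{-1},$$ where $[V_N^z]_{mn}:=(\alpha_n-\frac{i\sqrt z}{4\pi})\delta_{mn}$ and $[P_N^z]_{mn}:=\frac{e^{i\sqrt z|x_m-x_n|}}{4\pi|x_m-x_n|}(1-\delta_{mn})$ (with the corresponding boundary values on the cut).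
   Context: For $z\in\mathbb{C}\setminus[0,+\infty)$, $\sqrt{z}$ denotes the branch with $\Im\sqrt z>0$ (on the cut $z=v^2$, $v>0$, the boundary values are $\sqrt z\to v$ from above and $\sqrt z\to-v$ from below). $\Gamma_N^z$ is the $N\times N$ matrix with entries $[\Gamma_N^z]_{mn}=(\alpha_n-\frac{i\sqrt z}{4\pi})\delta_{mn}-\frac{e^{i\sqrt z|x_m-x_n|}}{4\pi|x_m-x_n|}(1-\delta_{mn})$, where the off-diagonal term is understood to vanish for $m=n$. *)

From HB Require Import structures.
From mathcomp Require Import all_boot all_order all_algebra.
From mathcomp Require Import all_classical all_reals all_analysis.
From mathcomp Require Export complex.
Import Order.TTheory GRing.Theory Num.Theory.
Import numFieldTopology.Exports numFieldNormedType.Exports.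

Set Implicit Arguments.
Unset Strict Implicit.
Unset Printing Implicit Defensive.

Local Open Scope ring_scope.
Local Open Scope classical_set_scope.
Local Open Scope complex_scope.

(* The complex numbers R[i] (R : realType) carry the usual (modulus) normed
   topology; MathComp-Analysis provides it for every numFieldType, we make it
   canonical on the concrete type R[i]. *)
#[non_forgetful_inheritance]
HB.instance Definition _ (R : rcfType) := NormedModule.copy R[i] (R[i])^o.

Section Defs.
Variable R : realType.

Definition dist3 (x y : 'rV[R]_3) : R :=
  Num.sqrt (\sum_(i < 3) (x ord0 i - y ord0 i) ^+ 2).

(* e^{i w} for w : C, i.e. e^{-Im w} (cos (Re w) + i sin (Re w)). *)
Definition expi (w : R[i]) : R[i] :=
  (expR (- complex.Im w) * cos (complex.Re w))
    +i* (expR (- complex.Im w) * sin (complex.Re w)).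

Definition on_cut (z : R[i]) : Prop := complex.Im z = 0 /\ 0 <= complex.Re z.

(* The branch of the square root with Im sqrt z > 0 on C \ [0,+oo):
   MathComp's sqrtC (argument in [0, pi)). *)
Definition sqrt_branch (z : R[i]) : R[i] := sqrtC z.

Variables (N : nat) (x : 'I_N -> 'rV[R]_3) (alpha : 'I_N -> R).

Local Notation d m n := ((dist3 (x m) (x n))%:C).
Local Notation fourpi := ((4 * pi : R)%:C).

(* Gamma with sqrt z replaced by a parameter k (k = sqrt z, or its boundary
   value +-v on the cut). For m = n the off-diagonal term is multiplied by 0. *)
Definition GammaK (k : R[i]) : 'M[R[i]]_N :=
  \matrix_(m, n) (((alpha n)%:C - 'i * k / fourpi) * (m == n)%:R
                  - expi (k * d m n) / (fourpi * d m n) * (1 - (m == n)%:R)).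

Definition Gamma (z : R[i]) : 'M[R[i]]_N := GammaK (sqrt_branch z).

Definition VK (k : R[i]) : 'M[R[i]]_N :=
  \matrix_(m, n) (((alpha n)%:C - 'i * k / fourpi) * (m == n)%:R).

Definition PK (k : R[i]) : 'M[R[i]]_N :=
  \matrix_(m, n) (expi (k * d m n) / (fourpi * d m n) * (1 - (m == n)%:R)).

(* j-th power of a square matrix (works for every size N, including 0). *)
Definition mxpow (A : 'M[R[i]]_N) (j : nat) : 'M[R[i]]_N := iter j (mulmx A) 1%:M.

Definition neumann_term (k : R[i]) (j : nat) : 'M[R[i]]_N :=
  mxpow (invmx (VK k) *m PK k) j *m invmx (VK k).

Definition neumann_rep (k : R[i]) : Prop :=
  forall m n : 'I_N,
    cvgn (series (fun j => Normc.normc (neumann_term k j m n))) /\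
    series (fun j => neumann_term k j m n) @ \oo --> invmx (GammaK k) m n.

End Defs.

From HB Require Import structures.
From mathcomp Require Import all_boot all_order all_algebra.
From mathcomp Require Import all_classical all_reals all_analysis.
From mathcomp Require Import complex.
From mathcomp Require Import ring lra.
Import Order.TTheory GRing.Theory Num.Theory.
Import numFieldTopology.Exports numFieldNormedType.Exports.
Local Open Scope ring_scope.
Local Open Scope classical_set_scope.
Local Open Scope complex_scope.
Set Implicit Arguments.
Unset Strict Implicit.
Unset Printing Implicit Defensive.

(* With k = sqrt z, Im k >= 0 off the cut and k tends to +-v on its two sides
   at z = v^2, so everything reduces to parameters k with Im k >= 0.  There
   Gamma = V (1 - A) with V = diag (alpha_n - i k / 4 pi) and A = V^-1 P.  As
   Re V_nn >= alpha_n > 0 and |e^{i k d}| <= 1, |A_mn| <= 1 / (4 pi alpha_m d_mn),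
   so (A2) bounds the Frobenius norm of A below 1.  That norm is
   submultiplicative, hence 1 - A is invertible and sum_j A^j V^-1 converges
   geometrically, entrywise and absolutely, to (1 - A)^-1 V^-1 = Gamma^-1. *)

Section ComplexModulus.
Variable R : realType.
Local Notation normc := (@Normc.normc R).
Local Notation Re := (@complex.Re R).
Local Notation Im := (@complex.Im R).

Lemma normC_normc (z : R[i]) : `|z| = (normc z)%:C.
Proof. by []. Qed.

Lemma normc_ge0 (z : R[i]) : 0 <= normc z.
Proof. by case: z => a b /=; rewrite sqrtr_ge0. Qed.

Lemma normc_real (r : R) : normc r%:C = `|r|.
Proof. by rewrite /= expr0n /= addr0 sqrtr_sqr. Qed.

Lemma normc_ge_Re (z : R[i]) : `|Re z| <= normc z.
Proof.
case: z => a b /=; rewrite -sqrtr_sqr; apply: ler_wsqrtr.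
by rewrite lerDl sqr_ge0.
Qed.

Lemma normc_ge_Im (z : R[i]) : `|Im z| <= normc z.
Proof.
case: z => a b /=; rewrite -sqrtr_sqr; apply: ler_wsqrtr.
by rewrite lerDr sqr_ge0.
Qed.

Lemma normc_le_ReIm (z : R[i]) : normc z <= `|Re z| + `|Im z|.
Proof.
case: z => a b.
have -> : a +i* b = a%:C + 'i * b%:C.
  by apply/eqP; rewrite eq_complex /=; apply/andP; split; apply/eqP; ring.
apply: le_trans (le_normcD _ _) _.
rewrite Normc.normcM !normc_real /= expr0n expr1n /= add0r sqrtr1 mul1r.
by rewrite !(mul0r, mul1r, subr0, addr0, add0r).
Qed.

Lemma normc_sum (I : finType) (f : I -> R[i]) :
  normc (\sum_i f i) <= \sum_i normc (f i).
Proof.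
elim/big_rec2: _ => [|i y1 y2 _ IH]; first by rewrite Normc.normc0.
by apply: le_trans (le_normcD _ _) _; rewrite lerD2l.
Qed.

Lemma normc_expi (w : R[i]) : normc (expi w) = expR (- Im w).
Proof.
rewrite /expi /= !exprMn -mulrDr cos2Dsin2 mulr1 sqrtr_sqr.
by rewrite ger0_norm // expR_ge0.
Qed.

Lemma Im_sqr (w : R[i]) : Im (w ^+ 2) = 2 * Re w * Im w.
Proof. by case: w => a b /=; ring. Qed.

Lemma ReB (w z : R[i]) : Re (w - z) = Re w - Re z.
Proof. by case: w; case: z. Qed.

Lemma ImB (w z : R[i]) : Im (w - z) = Im w - Im z.
Proof. by case: w; case: z. Qed.

End ComplexModulus.

Section ComplexConvergence.
Variable R : realType.
Local Notation normc := (@Normc.normc R).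
Local Notation Re := (@complex.Re R).
Local Notation Im := (@complex.Im R).

Lemma cvgC_normcP {T : Type} {F : set_system T} {FF : Filter F}
    (f : T -> R[i]) (l : R[i]) :
  f @ F --> l <-> forall e : R, 0 < e -> \forall t \near F, normc (l - f t) < e.
Proof.
split=> [/cvgrPdist_lt fl e e_gt0|fl].
  have e_gt0' : 0 < e%:C :> R[i] by rewrite ltcR.
  near=> t; rewrite -ltcR -normC_normc; near: t; exact: fl.
apply/cvgrPdist_lt => eps; rewrite ltcE /= => /andP[/eqP eps_real eps_gt0].
have -> : eps = (Re eps)%:C by case: eps eps_real {eps_gt0} => a b /= ->.
near=> t; rewrite normC_normc ltcR; near: t; exact: fl.
Unshelve. all: by end_near.
Qed.

Lemma cvg_Re {T : Type} {F : set_system T} {FF : Filter F}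
    (f : T -> R[i]) (l : R[i]) :
  f @ F --> l -> (fun t => Re (f t)) @ F --> Re l.
Proof.
move=> /cvgC_normcP fl; apply/cvgrPdist_lt => e e_gt0.
near=> t; rewrite -ReB; apply: le_lt_trans (normc_ge_Re _) _; near: t.
exact: fl.
Unshelve. all: by end_near.
Qed.

Lemma cvg_Im {T : Type} {F : set_system T} {FF : Filter F}
    (f : T -> R[i]) (l : R[i]) :
  f @ F --> l -> (fun t => Im (f t)) @ F --> Im l.
Proof.
move=> /cvgC_normcP fl; apply/cvgrPdist_lt => e e_gt0.
near=> t; rewrite -ImB; apply: le_lt_trans (normc_ge_Im _) _; near: t.
exact: fl.
Unshelve. all: by end_near.
Qed.

Lemma cvgC_ReIm {T : Type} {F : set_system T} {FF : Filter F}
    (f : T -> R[i]) (l : R[i]) :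
  (fun t => Re (f t)) @ F --> Re l -> (fun t => Im (f t)) @ F --> Im l ->
  f @ F --> l.
Proof.
move=> /cvgrPdist_lt Re_fl /cvgrPdist_lt Im_fl; apply/cvgC_normcP => e e_gt0.
have e2_gt0 : 0 < e / 2 by rewrite divr_gt0.
near=> t; apply: le_lt_trans (normc_le_ReIm _) _; rewrite ReB ImB.
rewrite [e](splitr e) ltrD //; near: t; [exact: Re_fl | exact: Im_fl].
Unshelve. all: by end_near.
Qed.

Lemma cvg_expi (w : R[i]) : expi z @[z --> w] --> expi w.
Proof.
have nbhs_w : ProperFilter (nbhs w) by exact: nbhs_pfilter.
have Re_w : (fun z : R[i] => Re z) @ w --> Re w by apply: cvg_Re; exact: cvg_id.
have Im_w : (fun z : R[i] => Im z) @ w --> Im w by apply: cvg_Im; exact: cvg_id.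
have exp_w : (fun z : R[i] => expR (- Im z)) @ w --> expR (- Im w).
  exact: (continuous_cvg _ (@continuous_expR R (- Im w)) (cvgN Im_w)).
have cos_w : (fun z : R[i] => cos (Re z)) @ w --> cos (Re w).
  exact: (continuous_cvg _ (@continuous_cos R (Re w)) Re_w).
have sin_w : (fun z : R[i] => sin (Re z)) @ w --> sin (Re w).
  exact: (continuous_cvg _ (@continuous_sin R (Re w)) Re_w).
apply: cvgC_ReIm => /=; first exact: (cvgM exp_w cos_w).
exact: (cvgM exp_w sin_w).
Qed.

Lemma Im_sqrtC_ge0 (z : R[i]) : 0 <= Im (sqrtC z).
Proof. by have := @Im_rootC_ge0 _ 2 z isT; rewrite -complexIm ler0c. Qed.

(* For w = sqrt z, Im z = 2 Re w Im w with Im w >= 0: where c Im z > 0 also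
   c Re w > 0, so |c + w| >= |c|, while |c - w| |c + w| = |c^2 - z|. *)
Lemma sqrtC_cvg_cut (c : R) (A : set R[i]) :
  c != 0 -> (forall z, A z -> 0 < c * Im z) ->
  sqrtC z @[z --> within A (nbhs ((c ^+ 2)%:C))] --> c%:C.
Proof.
move=> c_neq0 A_side; have c_gt0 : 0 < `|c| by rewrite normr_gt0.
have nbhs_c2 : ProperFilter (nbhs ((c ^+ 2)%:C : R[i])) by exact: nbhs_pfilter.
have within_c2 : Filter (within A (nbhs ((c ^+ 2)%:C))) by exact: within_filter.
apply/(cvgC_normcP (FF := within_c2)) => e e_gt0.
have near_c2 := proj1 (@cvgC_normcP _ _ nbhs_c2 _ _)
  (@cvg_id _ (nbhs ((c ^+ 2)%:C : R[i]))).
suff : \forall z \near nbhs ((c ^+ 2)%:C : R[i]),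
    A z -> normc (c%:C - sqrtC z) < e by [].
move: (near_c2 _ (mulr_gt0 e_gt0 c_gt0)).
apply: (filterS (Filter := nbhs_c2)) => z z_near /A_side cIm_z.
set w := sqrtC z; have w_sqr : w ^+ 2 = z by rewrite sqrtCK.
have Im_w := Im_sqrtC_ge0 z; rewrite -/w in Im_w.
have Re_w : 0 < c * Re w.
  by move: cIm_z; rewrite -w_sqr Im_sqr => cIm; nra.
have c_le : `|c| <= normc (c%:C + w).
  apply: (le_trans _ (normc_ge_Re _)).
  have -> : Re (c%:C + w) = c + Re w by case: (w).
  by rewrite -!sqrtr_sqr; apply: ler_wsqrtr; nra.
have factor : (c ^+ 2)%:C - z = (c%:C - w) * (c%:C + w).
  by rewrite -w_sqr rmorphXn /=; ring.
move: z_near; rewrite factor Normc.normcM => z_near.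
have := normc_ge0 (c%:C - w); nra.
Qed.

End ComplexConvergence.

Lemma cauchy_schwarz (R : realDomainType) (I : finType) (a b : I -> R) :
  (\sum_i a i * b i) ^+ 2 <= (\sum_i a i ^+ 2) * (\sum_i b i ^+ 2).
Proof.
have lagrange : \sum_i \sum_j (a i * b j - a j * b i) ^+ 2 =
    2 * ((\sum_i a i ^+ 2) * (\sum_i b i ^+ 2) - (\sum_i a i * b i) ^+ 2).
  rewrite (eq_bigr (fun i => \sum_j (a i ^+ 2 * b j ^+ 2)
      + \sum_j (b i ^+ 2 * a j ^+ 2) - 2 * \sum_j (a i * b i * (a j * b j)))).
    by rewrite sumrB big_split /= -mulr_sumr -!big_distrlr /=; ring.
  move=> i _; rewrite mulr_sumr -big_split /= -sumrB.
  by apply: eq_bigr => j _; ring.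
have : 0 <= \sum_i \sum_j (a i * b j - a j * b i) ^+ 2.
  by apply: sumr_ge0 => i _; apply: sumr_ge0 => j _; exact: sqr_ge0.
by rewrite lagrange; nra.
Qed.

Lemma mulmx_diag_inv (F : fieldType) (n : nat) (d : 'I_n -> F) :
  (forall i, d i != 0) ->
  diag_mx (\row_i (d i)^-1) *m diag_mx (\row_i d i) = 1%:M.
Proof.
move=> d_neq0; apply/matrixP => i j; rewrite mul_diag_mx !mxE.
by case: eqP => [->|_]; rewrite ?mulr1n ?mulr0n ?mulr0 // mulVf.
Qed.

Section Frobenius.
Variable R : realType.
Local Notation normc := (@Normc.normc R).

Definition frob (p q : nat) (M : 'M[R[i]]_(p, q)) : R :=
  Num.sqrt (\sum_i \sum_j normc (M i j) ^+ 2).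

Lemma frob_ge0 p q (M : 'M[R[i]]_(p, q)) : 0 <= frob M.
Proof. exact: sqrtr_ge0. Qed.

Lemma normc_le_frob p q (M : 'M[R[i]]_(p, q)) i j : normc (M i j) <= frob M.
Proof.
rewrite -[normc _]ger0_norm ?normc_ge0 // -sqrtr_sqr /frob; apply: ler_wsqrtr.
rewrite (bigD1 i) //= (bigD1 j (P := predT)) //= -addrA lerDl.
apply: addr_ge0; first by apply: sumr_ge0 => l _; exact: sqr_ge0.
by apply: sumr_ge0 => l _; apply: sumr_ge0 => l' _; exact: sqr_ge0.
Qed.

Lemma frobM p q r (M : 'M[R[i]]_(p, q)) (Q : 'M[R[i]]_(q, r)) :
  frob (M *m Q) <= frob M * frob Q.
Proof.
have entry i j : normc ((M *m Q) i j) ^+ 2 <=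
    (\sum_l normc (M i l) ^+ 2) * (\sum_l normc (Q l j) ^+ 2).
  apply: (le_trans _ (cauchy_schwarz (fun l => normc (M i l))
                                     (fun l => normc (Q l j)))).
  have row_col : normc ((M *m Q) i j) <= \sum_l normc (M i l) * normc (Q l j).
    rewrite mxE; apply: le_trans (normc_sum _) _.
    by apply: ler_sum => l _; rewrite Normc.normcM.
  have := normc_ge0 ((M *m Q) i j); nra.
rewrite /frob -sqrtrM; last first.
  by apply: sumr_ge0 => i _; apply: sumr_ge0 => j _; exact: sqr_ge0.
apply: ler_wsqrtr; apply: le_trans.
  by apply: ler_sum => i _; apply: ler_sum => j _; exact: entry.
rewrite mulr_suml; apply: ler_sum => i _.
by rewrite -mulr_sumr exchange_big /=; exact: le_refl.
Qed.

Lemma frob_mxpow_mul n (A B : 'M[R[i]]_n) j :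
  frob (mxpow A j *m B) <= frob A ^+ j * frob B.
Proof.
elim: j => [|j IH]; first by rewrite mul1mx expr0 mul1r lexx.
have -> : mxpow A j.+1 *m B = A *m (mxpow A j *m B) by rewrite mulmxA.
rewrite exprS -mulrA.
apply: le_trans (frobM _ _) _.
by apply: ler_wpM2l; [exact: frob_ge0 | exact: IH].
Qed.

Lemma unitmx_1B_frob n (A : 'M[R[i]]_n) : frob A < 1 -> 1%:M - A \in unitmx.
Proof.
move=> A_lt1; rewrite unitmxE unitfE; apply/negP => /det0P [v v_neq0].
rewrite mulmxBr mulmx1 => /eqP; rewrite subr_eq0 => /eqP v_fixed.
have frob_v : frob v <= 0.
  have := frobM v A; rewrite -v_fixed.
  have := frob_ge0 v; have := frob_ge0 A; nra.
suff v0 : v = 0 by rewrite v0 eqxx in v_neq0.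
apply/matrixP => i j; rewrite mxE; apply: Normc.eq0_normc.
apply/le_anti; rewrite normc_ge0 andbT.
exact: le_trans (normc_le_frob v i j) frob_v.
Qed.

Section NeumannSeries.
Variables (n : nat) (A B : 'M[R[i]]_n).
Hypothesis frobA_lt1 : frob A < 1.

Lemma normc_mxpow_mul_le j a b :
  normc ((mxpow A j *m B) a b) <= geometric (frob B) (frob A) j.
Proof.
rewrite /geometric /= mulrC; apply: le_trans (normc_le_frob _ a b) _.
exact: frob_mxpow_mul.
Qed.

Lemma neumann_series_abs_cvg a b :
  cvgn (series (fun j => normc ((mxpow A j *m B) a b))).
Proof.
apply: (@series_le_cvg _ _ (geometric (frob B) (frob A))).
- by move=> j; exact: normc_ge0.
- by move=> j; rewrite geometric_ge0 ?frob_ge0.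
- by move=> j; exact: normc_mxpow_mul_le.
- by apply: is_cvg_geometric_series; rewrite ger0_norm ?frob_ge0.
Qed.

Lemma mulmx_1B_neumann_sum J :
  (1%:M - A) *m \sum_(0 <= j < J) mxpow A j *m B = B - mxpow A J *m B.
Proof.
elim: J => [|J IH]; first by rewrite big_geq // mulmx0 mul1mx subrr.
rewrite big_nat_recr //= mulmxDr IH mulmxBl mul1mx.
by rewrite mulmxA addrA subrK.
Qed.

Lemma neumann_series_cvg a b :
  series (fun j => (mxpow A j *m B) a b) @ \oo --> (invmx (1%:M - A) *m B) a b.
Proof.
have unit_1B := unitmx_1B_frob frobA_lt1.
have partial J : \sum_(0 <= j < J) mxpow A j *m B =
    invmx (1%:M - A) *m (B - mxpow A J *m B).
  by rewrite -mulmx_1B_neumann_sum mulKmx.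
have remainder J : invmx (1%:M - A) *m B - \sum_(0 <= j < J) mxpow A j *m B =
    invmx (1%:M - A) *m (mxpow A J *m B) by rewrite partial mulmxBr subKr.
have normA : `|frob A| < 1 by rewrite ger0_norm ?frob_ge0.
apply/cvgC_normcP => e e_gt0.
have := cvg_geometric (frob (invmx (1%:M - A)) * frob B) normA.
move=> /cvgrPdist_lt /(_ e e_gt0); apply: filterS => J.
rewrite sub0r normrN ger0_norm; last by rewrite geometric_ge0 ?mulr_ge0 ?frob_ge0.
move=> geometric_lt; apply: (le_lt_trans _ geometric_lt).
have -> : (invmx (1%:M - A) *m B) a b - series (fun j => (mxpow A j *m B) a b) J =
    (invmx (1%:M - A) *m (mxpow A J *m B)) a b.
  by rewrite /series /= -summxE -remainder !mxE.
apply: le_trans (normc_le_frob _ a b) _; apply: le_trans (frobM _ _) _.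
rewrite /geometric /= -mulrA; apply: ler_wpM2l; first exact: frob_ge0.
by rewrite mulrC; exact: frob_mxpow_mul.
Qed.

End NeumannSeries.

End Frobenius.

Section PointInteractions.
Variables (R : realType) (N : nat) (x : 'I_N -> 'rV[R]_3) (alpha : 'I_N -> R).
Local Notation normc := (@Normc.normc R).
Local Notation Re := (@complex.Re R).
Local Notation Im := (@complex.Im R).
Local Notation fourpi := ((4 * pi : R)%:C).

Definition Vdiag (k : R[i]) (n : 'I_N) : R[i] := (alpha n)%:C - 'i * k / fourpi.

Lemma VK_diag_mx k : VK alpha k = diag_mx (\row_n Vdiag k n).
Proof.
apply/matrixP => i j; rewrite !mxE.
by case: eqP => [->|_]; rewrite ?mulr1 ?mulr0 ?mulr1n ?mulr0n.
Qed.

Lemma GammaK_diag k n : GammaK x alpha k n n = Vdiag k n.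
Proof. by rewrite mxE eqxx subrr !mulr0 subr0 mulr1. Qed.

Lemma GammaK_diag_inj n k1 k2 :
  GammaK x alpha k1 n n = GammaK x alpha k2 n n -> k1 = k2.
Proof.
have fourpi_neq0 : fourpi^-1 != 0.
  by rewrite invr_eq0 fmorph_eq0 gt_eqF //; have := pi_gt0 R; lra.
by rewrite !GammaK_diag /Vdiag
  => /addrI/oppr_inj/(mulIf fourpi_neq0)/(mulfI (neq0Ci _)).
Qed.

Lemma cvg_GammaK m n (k0 : R[i]) :
  (fun k => GammaK x alpha k m n) @ nbhs k0 --> GammaK x alpha k0 m n.
Proof.
have nbhs_k0 : ProperFilter (nbhs k0) by exact: nbhs_pfilter.
have -> : (fun k => GammaK x alpha k m n) = (fun k =>
    ((alpha n)%:C - 'i * k / fourpi) * (m == n)%:R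
    - expi (k * (dist3 (x m) (x n))%:C) / (fourpi * (dist3 (x m) (x n))%:C)
      * (1 - (m == n)%:R)).
  by apply/funext => k; rewrite mxE.
rewrite [GammaK _ _ _ _ _]mxE.
have cvg_k : (fun k : R[i] => k) @ nbhs k0 --> k0 by exact: cvg_id.
apply: cvgB; apply: cvgM; try exact: cvg_cst.
  apply: cvgB; first exact: cvg_cst.
  apply: cvgM; last exact: cvg_cst.
  by apply: cvgM; [exact: cvg_cst | exact: cvg_k].
apply: cvgM; last exact: cvg_cst.
have cvg_kd : (fun k => k * (dist3 (x m) (x n))%:C) @ nbhs k0 -->
    k0 * (dist3 (x m) (x n))%:C by apply: cvgM; [exact: cvg_k | exact: cvg_cst].
exact: (continuous_cvg (h := @expi R) _
  (@cvg_expi R (k0 * (dist3 (x m) (x n))%:C)) cvg_kd).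
Qed.

Lemma Gamma_cvg_cut (c : R) (A : set R[i]) (m n : 'I_N) :
  c != 0 -> (forall z, A z -> 0 < c * Im z) ->
  (fun z => Gamma x alpha z m n) @ within A (nbhs ((c ^+ 2)%:C))
    --> GammaK x alpha c%:C m n.
Proof.
move=> c_neq0 A_side.
have nbhs_c2 : ProperFilter (nbhs ((c ^+ 2)%:C : R[i])) by exact: nbhs_pfilter.
have within_c2 : Filter (within A (nbhs ((c ^+ 2)%:C))) by exact: within_filter.
exact: (@continuous_cvg _ _ _ _ within_c2 _ (fun k => GammaK x alpha k m n) _
  (@cvg_GammaK m n c%:C) (sqrtC_cvg_cut c_neq0 A_side)).
Qed.

Section UpperHalfPlane.
Hypothesis alpha_gt0 : forall n, 0 < alpha n.
Variable k : R[i].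
Hypothesis Im_k_ge0 : 0 <= Im k.

Local Notation A := (invmx (VK alpha k) *m PK x k).

Lemma Re_Vdiag n : Re (Vdiag k n) = alpha n + Im k / (4 * pi).
Proof. by rewrite /Vdiag -fmorphV; case: k => a b /=; ring. Qed.

Lemma alpha_le_normc_Vdiag n : alpha n <= normc (Vdiag k n).
Proof.
apply: (le_trans _ (normc_ge_Re _)); rewrite Re_Vdiag.
have shift_ge0 : 0 <= Im k / (4 * pi).
  by rewrite divr_ge0 // mulr_ge0 // ltW // pi_gt0.
have alpha_n_gt0 := alpha_gt0 n; rewrite ger0_norm; lra.
Qed.

Lemma Vdiag_neq0 n : Vdiag k n != 0.
Proof.
apply/negP => /eqP V0; have := alpha_le_normc_Vdiag n.
by rewrite V0 Normc.normc0; have := alpha_gt0 n; lra.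
Qed.

Lemma VK_inv_mul : diag_mx (\row_n (Vdiag k n)^-1) *m VK alpha k = 1%:M.
Proof.
rewrite VK_diag_mx; apply: (mulmx_diag_inv (d := Vdiag k)).
exact: Vdiag_neq0.
Qed.

Lemma VK_unit : VK alpha k \in unitmx.
Proof. by case: (mulmx1_unit VK_inv_mul). Qed.

Lemma A_entry i j : A i j = (Vdiag k i)^-1 * PK x k i j.
Proof.
have -> : invmx (VK alpha k) = diag_mx (\row_n (Vdiag k n)^-1).
  by rewrite -[RHS](mulmxK VK_unit) VK_inv_mul mul1mx.
by rewrite mul_diag_mx !mxE.
Qed.

Lemma A_diag i : A i i = 0.
Proof. by rewrite A_entry mxE eqxx subrr !mulr0. Qed.

Lemma normc_PK_le i j : normc (PK x k i j) <= (4 * pi * dist3 (x i) (x j))^-1.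
Proof.
have d_ge0 : 0 <= dist3 (x i) (x j) := sqrtr_ge0 _.
have den_ge0 : 0 <= 4 * pi * dist3 (x i) (x j) by have := pi_gt0 R; nra.
rewrite mxE; case: (boolP (i == j)) => _.
  by rewrite subrr mulr0 Normc.normc0 invr_ge0.
rewrite subr0 mulr1 Normc.normcM Normc.normcV -rmorphM normc_real.
rewrite ger0_norm // normc_expi -[X in _ <= X]mul1r.
apply: ler_wpM2r; first by rewrite invr_ge0.
rewrite expR_le1 oppr_le0.
by case: (k) Im_k_ge0 => a b /= b_ge0; rewrite mulr0 add0r mulr_ge0.
Qed.

Lemma normc_A_le i j :
  normc (A i j) <= (alpha i)^-1 * (4 * pi * dist3 (x i) (x j))^-1.
Proof.
rewrite A_entry Normc.normcM; apply: ler_pM; rewrite ?normc_ge0 //.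
  have Vdiag_gt0 := lt_le_trans (alpha_gt0 i) (alpha_le_normc_Vdiag i).
  by rewrite Normc.normcV lef_pV2 ?posrE ?alpha_gt0 ?alpha_le_normc_Vdiag.
exact: normc_PK_le.
Qed.

Hypothesis small_coupling : \sum_(m < N) \sum_(n < N | n != m)
  1 / ((4 * pi * alpha m) ^+ 2 * dist3 (x m) (x n) ^+ 2) < 1.

Lemma frob_A_lt1 : frob A < 1.
Proof.
rewrite /frob -[X in _ < X]sqrtr1 ltr_sqrt ?ltr01 //.
apply: (le_lt_trans _ small_coupling).
apply: ler_sum => i _.
rewrite (bigD1 i) //= A_diag Normc.normc0 expr2 mul0r add0r.
apply: ler_sum => j _.
have -> : 1 / ((4 * pi * alpha i) ^+ 2 * dist3 (x i) (x j) ^+ 2) =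
    ((alpha i)^-1 * (4 * pi * dist3 (x i) (x j))^-1) ^+ 2.
  by rewrite mul1r !expr2 !invfM; ring.
have := normc_A_le i j; have := normc_ge0 (A i j); nra.
Qed.

Lemma VK_mul_1B : VK alpha k *m (1%:M - A) = GammaK x alpha k.
Proof.
rewrite mulmxBr mulmx1 mulmxA mulmxV ?VK_unit // mul1mx.
by apply/matrixP => i j; rewrite !mxE.
Qed.

Lemma GammaK_unit : GammaK x alpha k \in unitmx.
Proof. by rewrite -VK_mul_1B unitmx_mul VK_unit unitmx_1B_frob ?frob_A_lt1. Qed.

Lemma invmx_GammaK :
  invmx (GammaK x alpha k) = invmx (1%:M - A) *m invmx (VK alpha k).
Proof.
have right_inv :
    GammaK x alpha k *m (invmx (1%:M - A) *m invmx (VK alpha k)) = 1%:M.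
  rewrite -VK_mul_1B -mulmxA (mulmxA (1%:M - A)).
  by rewrite mulmxV ?unitmx_1B_frob ?frob_A_lt1 // mul1mx mulmxV ?VK_unit.
by rewrite -[LHS]mulmx1 -{1}right_inv mulKmx ?GammaK_unit.
Qed.

Lemma neumann_rep_upper : neumann_rep x alpha k.
Proof.
move=> m n; rewrite /neumann_term invmx_GammaK; split.
  exact: (@neumann_series_abs_cvg _ _ _ _ frob_A_lt1).
exact: (@neumann_series_cvg _ _ _ _ frob_A_lt1).
Qed.

End UpperHalfPlane.

End PointInteractions.

Theorem lemma3p1 (R : realType) (N : nat) (x : 'I_N -> 'rV[R]_3)
  (alpha : 'I_N -> R)
  (Hdistinct : injective x)
  (A1 : forall n, 0 < alpha n)
  (A2 : \sum_(m < N) \sum_(n < N | n != m)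
          1 / ((4 * pi * alpha m) ^+ 2 * dist3 (x m) (x n) ^+ 2) < 1) :
  (forall z : R[i], ~ on_cut z ->
     Gamma x alpha z \in unitmx /\ neumann_rep x alpha (sqrt_branch z)) /\
  (forall v : R, 0 < v ->
     (forall m n : 'I_N,
        (fun z => Gamma x alpha z m n)
          @ within [set z : R[i] | 0 < complex.Im z] (nbhs ((v ^+ 2)%:C))
          --> GammaK x alpha (v%:C) m n) /\
     (forall m n : 'I_N,
        (fun z => Gamma x alpha z m n)
          @ within [set z : R[i] | complex.Im z < 0] (nbhs ((v ^+ 2)%:C))
          --> GammaK x alpha (- v%:C) m n) /\
     GammaK x alpha (v%:C) \in unitmx /\
     GammaK x alpha (- v%:C) \in unitmx /\
     ((0 < N)%N -> GammaK x alpha (v%:C) != GammaK x alpha (- v%:C)) /\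
     neumann_rep x alpha (v%:C) /\
     neumann_rep x alpha (- v%:C)).
Proof.
split=> [z _|v v_gt0].
  have Im_k := Im_sqrtC_ge0 z.
  split; first exact: (GammaK_unit A1 Im_k A2).
  exact: (neumann_rep_upper A1 Im_k A2).
have Im_v : 0 <= complex.Im (v%:C : R[i]) by [].
have Im_Nv : 0 <= complex.Im (- v%:C : R[i]) by rewrite /= oppr0.
have v_neq0 : v != 0 by rewrite gt_eqF.
have Nv_neq0 : - v != 0 by rewrite oppr_eq0.
split.
  by move=> m n; apply: Gamma_cvg_cut => // z /= Im_z; exact: mulr_gt0.
split.
  move=> m n; rewrite -sqrrN -rmorphN.
  by apply: Gamma_cvg_cut => // z /= Im_z; nra.
split; first exact: (GammaK_unit A1 Im_v A2).
split; first exact: (GammaK_unit A1 Im_Nv A2).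
split.
  move=> N_gt0; pose n0 := Ordinal N_gt0.
  apply/negP => /eqP /(congr1 (fun M : 'M[R[i]]_N => M n0 n0)) /GammaK_diag_inj.
  by rewrite -rmorphN => /complexI v_eq; lra.
split; first exact: (neumann_rep_upper A1 Im_v A2).
exact: (neumann_rep_upper A1 Im_Nv A2).
Qed.
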